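(* Let $\Gamma=\langle \gamma_1,\dots,\gamma_k\rangle$ and $F=\langle f_1,\dots,f_k\rangle$ be two marked $k$-generated groups, with $F$ finite, and let $\Delta$ be their diagonal product. Then there exist constants $C_1,C_2>0$ such that for every word $w$ in the free group $\mathbb{F}_k$, $$|w^{\Gamma}| \leq |w^{\Delta}| \leq C_1|w^{\Gamma}|+C_2,$$ where norms are word lengths with respect to the marked generating sets. Moreover, the constants $C_1,C_2$ depend only on $F$ and locally on $\Gamma$ in the following sense: there exists $R>0$ such that if $\Gamma'=\langle\gamma'_1,\dots,\gamma'_k\rangle$ is any marked $k$-generated group such that $\Gamma$ is a marked quotient of $\Gamma'$ and the marked balls of radius $R$ in $\Gamma'$ and $\Gamma$ are equivalent, then for every word $w\in\mathbb{F}_k$, $$|w^{\Gamma'}| \leq |w^{\Delta'}| \leq C_1|w^{\Gamma'}|+C_2,$$ where $\Delta'$ is the diagonal product of $\Gamma'$ and $F$.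
   Context: A marked $k$-generated group is a group together with an ordered generating set of $k$ elements, equivalently a quotient of the free group $\mathbb{F}_k$ of rank $k$. The diagonal product of marked groups $\Gamma=\langle \gamma_1,\dots,\gamma_k\rangle$ and $F=\langle f_1,\dots,f_k\rangle$ is the subgroup $\Delta$ of $\Gamma\times F$ generated by $(\gamma_1,f_1),\dots,(\gamma_k,f_k)$, marked by this ordered generating set. For a word $w\in\mathbb{F}_k$, $w^{\Gamma}$, $w^F$, $w^{\Delta}$ denote its evaluations in $\Gamma$, $F$, $\Delta$. $\Gamma$ is a marked quotient of $\Gamma'$ if $\gamma'_i\mapsto\gamma_i$ induces a surjective homomorphism (equivalently $w^{\Gamma'}=e$ implies $w^{\Gamma}=e$ for all $w$). The marked balls of radius $R$ in $\Gamma$ and $\Gamma'$ are equivalent if for every word $w\in\mathbb{F}_k$ of length at most $2R$, $w^{\Gamma'}=e$ iff $w^{\Gamma}=e$. *)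

From Stdlib Require List.
From mathcomp Require Import all_boot.
From mathcomp Require Import boolp.
Set Implicit Arguments. Unset Strict Implicit. Unset Printing Implicit Defensive.

Record Grp := MkGrp {
  gcar :> Type;
  gmul : gcar -> gcar -> gcar;
  ginv : gcar -> gcar;
  gone : gcar;
  gmulA : forall x y z, gmul x (gmul y z) = gmul (gmul x y) z;
  gmul1 : forall x, gmul gone x = x;
  gmulV : forall x, gmul (ginv x) x = gone }.

Definition finite_grp (F : Grp) : Prop := exists s : seq F, forall x : F, List.In x s.

(* Words in the free group F_k: sequences of letters (i, b), meaning the
   generator i (b = false) or its inverse (b = true). *)
Definition word (k : nat) := seq ('I_k * bool).

Definition eval (k : nat) (G : Grp) (gam : 'I_k -> G) (w : word k) : G :=
  foldr (fun l g => gmul (if l.2 then ginv (gam l.1) else gam l.1) g) (gone G) w.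

Definition generates (k : nat) (G : Grp) (gam : 'I_k -> G) : Prop :=
  forall g : G, exists w : word k, eval gam w = g.

Definition elt_len (k : nat) (T : Type) (ev : word k -> T) (w : word k) : nat :=
  ex_minn (P := fun n => `[< exists u : word k, size u = n /\ ev u = ev w >])
    (ex_intro _ (size w) (introT (asboolP _) (ex_intro _ w (conj erefl erefl)))).

Definition norm_G (k : nat) (G : Grp) (gam : 'I_k -> G) (w : word k) : nat :=
  elt_len (eval gam) w.

(* |w^Delta| where Delta = diagonal product of (G,gam) and (F,f): the subgroup
   of G x F generated by the pairs (gam i, f i); w^Delta = (w^G, w^F). *)
Definition norm_diag (k : nat) (G F : Grp) (gam : 'I_k -> G) (f : 'I_k -> F)
    (w : word k) : nat :=
  elt_len (fun u => (eval gam u, eval f u)) w.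

Definition marked_quotient (k : nat) (G' G : Grp) (gam' : 'I_k -> G')
    (gam : 'I_k -> G) : Prop :=
  forall w : word k, eval gam' w = gone G' -> eval gam w = gone G.

Definition balls_equiv (k : nat) (R : nat) (G' G : Grp) (gam' : 'I_k -> G')
    (gam : 'I_k -> G) : Prop :=
  forall w : word k, size w <= 2 * R ->
    (eval gam' w = gone G' <-> eval gam w = gone G).

(* A word w and a geodesic word v for w^Gamma differ by a relator v^-1 w of
   Gamma.  Since F is finite, the relators of Gamma take only finitely many
   values in F, and each value is already attained by a relator of length at
   most some N.  Replacing v^-1 w by such a short relator r gives the word v r,
   which has the same image as w in both Gamma and F, so
   |w^Delta| <= |w^Gamma| + N.  Relators of length <= 2R of Gamma are also
   relators of any Gamma' with an equivalent R-ball, so the same N works for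
   every such Gamma' of which Gamma is a marked quotient. *)

From mathcomp Require Import all_boot.
From mathcomp Require Import boolp.

Set Implicit Arguments. Unset Strict Implicit. Unset Printing Implicit Defensive.

Section GroupFacts.
Variable G : Grp.
Implicit Types x y : G.

Lemma gmulVr x : gmul x (ginv x) = gone G.
Proof.
rewrite -[gmul x _]gmul1 -(gmulV (ginv x)) -gmulA (gmulA (ginv x) x).
by rewrite gmulV gmul1.
Qed.

Lemma gmul1r x : gmul x (gone G) = x.
Proof. by rewrite -(gmulV x) gmulA gmulVr gmul1. Qed.

Lemma ginvK x : ginv (ginv x) = x.
Proof. by rewrite -[ginv (ginv x)]gmul1r -(gmulV x) gmulA gmulV gmul1. Qed.

Lemma gmul_eq1C x y : gmul x y = gone G -> gmul y x = gone G.
Proof.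
move=> xy1; have -> : x = ginv y by rewrite -[x]gmul1r -(gmulVr y) gmulA xy1 gmul1.
exact: gmulVr.
Qed.

End GroupFacts.

Section WordEval.
Variables (k : nat) (G : Grp) (gam : 'I_k -> G).

Lemma eval_cat (u v : word k) :
  eval gam (u ++ v) = gmul (eval gam u) (eval gam v).
Proof. by elim: u => [|a u IHu] /=; rewrite ?gmul1 // IHu gmulA. Qed.

Definition winv (w : word k) : word k := rev [seq (l.1, ~~ l.2) | l <- w].

Lemma eval_winvl (w : word k) : gmul (eval gam (winv w)) (eval gam w) = gone G.
Proof.
elim: w => [|a w IHw] /=; first by rewrite gmul1.
rewrite /winv /= rev_cons -cats1 -/(winv w) eval_cat /= gmul1r.
rewrite -gmulA (gmulA _ _ (eval gam w)).
by case: a => i [] /=; rewrite ?ginvK ?gmulV ?gmulVr gmul1.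
Qed.

Lemma eval_winvr (w : word k) : gmul (eval gam w) (eval gam (winv w)) = gone G.
Proof. exact/gmul_eq1C/eval_winvl. Qed.

End WordEval.

Section WordLength.
Variables (k : nat) (T : Type) (ev : word k -> T).

Lemma elt_len_witness (w : word k) :
  exists u, size u = elt_len ev w /\ ev u = ev w.
Proof. by rewrite /elt_len; case: ex_minnP => n /asboolP. Qed.

Lemma elt_len_le (w u : word k) : ev u = ev w -> elt_len ev w <= size u.
Proof.
move=> evu; rewrite /elt_len; case: ex_minnP => n _; apply.
by apply/asboolP; exists u.
Qed.

End WordLength.

Lemma elt_len_quotient (k : nat) (T T' : Type) (ev : word k -> T)
    (ev' : word k -> T') (w : word k) :
  (forall u v, ev' u = ev' v -> ev u = ev v) -> elt_len ev w <= elt_len ev' w.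
Proof.
move=> ev'_ev; have [u [<- evu]] := elt_len_witness ev' w.
by apply: elt_len_le; apply: ev'_ev.
Qed.

Lemma bounded_witnesses (A T : Type) (m : T -> nat) (P : A -> T -> Prop)
    (s : seq A) :
  exists N, forall x, List.In x s -> (exists t, P x t) ->
    exists t, m t <= N /\ P x t.
Proof.
elim: s => [|x s [N IHs]]; first by exists 0.
have [[t0 Pxt0] | noPx] := pselect (exists t, P x t).
  exists (maxn N (m t0)) => y /= [<- _ | ys Py]; first by exists t0; rewrite leq_maxr.
  have [t [mt Pyt]] := IHs y ys Py.
  by exists t; rewrite (leq_trans mt) ?leq_maxl.
by exists N => y /= [<- Py | ys]; [case: noPx | exact: IHs].
Qed.

Section ShortRelators.
Variables (k : nat) (G F : Grp) (gam : 'I_k -> G) (f : 'I_k -> F).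

Definition short_relators (N : nat) : Prop :=
  forall r : word k, eval gam r = gone G -> exists r' : word k,
    [/\ size r' <= N, eval gam r' = gone G & eval f r' = eval f r].

Lemma short_relatorsW (N M : nat) :
  N <= M -> short_relators N -> short_relators M.
Proof.
move=> leNM shortN r /shortN [r' [r'N r'1 fr']].
by exists r'; rewrite (leq_trans r'N).
Qed.

Lemma short_relators_finite : finite_grp F -> exists N, short_relators N.
Proof.
move=> [s s_all].
have [N HN] := bounded_witnesses (@size _)
  (fun x (r : word k) => eval gam r = gone G /\ eval f r = x) s.
exists N => r r1.
have [r' [r'N [r'1 fr']]] := HN _ (s_all (eval f r)) (ex_intro _ r (conj r1 erefl)).
by exists r'.
Qed.

Lemma norm_G_le_diag (w : word k) : norm_G gam w <= norm_diag gam f w.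
Proof. by apply: elt_len_quotient => u v [] ->. Qed.

Lemma norm_diag_le (N : nat) (w : word k) :
  short_relators N -> norm_diag gam f w <= norm_G gam w + N.
Proof.
move=> shortN; rewrite /norm_G; have [v [<- gv]] := elt_len_witness (eval gam) w.
have vw1 : eval gam (winv v ++ w) = gone G by rewrite eval_cat -gv eval_winvl.
have [r [rN r1 fr]] := shortN _ vw1.
apply: leq_trans (_ : size (v ++ r) <= _); last by rewrite size_cat leq_add2l.
apply: elt_len_le; congr pair; rewrite eval_cat ?r1 ?gmul1r //.
by rewrite fr !eval_cat gmulA eval_winvr gmul1.
Qed.

End ShortRelators.

Lemma short_relators_lift (k : nat) (G' G F : Grp) (gam' : 'I_k -> G')
    (gam : 'I_k -> G) (f : 'I_k -> F) (N : nat) :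
  marked_quotient gam' gam -> balls_equiv N gam' gam ->
  short_relators gam f N -> short_relators gam' f N.
Proof.
move=> quot ball shortN r r1.
have [r' [r'N r'1 fr']] := shortN r (quot r r1).
exists r'; split=> //; apply/ball => //.
by rewrite (leq_trans r'N) // leq_pmull.
Qed.

Theorem lemma2p1 (k : nat) (G F : Grp) (gam : 'I_k -> G) (f : 'I_k -> F)
  (genG : generates gam) (genF : generates f) (finF : finite_grp F) :
  exists C1 C2 : nat,
    [/\ 0 < C1, 0 < C2,
      (forall w : word k,
         norm_G gam w <= norm_diag gam f w <= C1 * norm_G gam w + C2) &
      exists R : nat, 0 < R /\
        forall (G' : Grp) (gam' : 'I_k -> G'),
          generates gam' -> marked_quotient gam' gam -> balls_equiv R gam' gam ->
          forall w : word k,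
            norm_G gam' w <= norm_diag gam' f w <= C1 * norm_G gam' w + C2].
Proof.
have [N shortN] := short_relators_finite gam f finF.
have shortSN : short_relators gam f N.+1 := short_relatorsW (leqnSn N) shortN.
have bounds (G' : Grp) (gam' : 'I_k -> G') (w : word k) :
    short_relators gam' f N.+1 ->
    norm_G gam' w <= norm_diag gam' f w <= 1 * norm_G gam' w + N.+1.
  by move=> short'; rewrite norm_G_le_diag mul1n norm_diag_le.
exists 1, N.+1; split=> // [w | ]; first exact: bounds.
exists N.+1; split=> // G' gam' _ quot ball w.
exact/bounds/(short_relators_lift quot ball).
Qed.
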